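(* In the $q$-shuffle algebra $\mathbb V$, the following three subalgebras coincide: (i) the subalgebra generated by $\{C_n\}_{n=1}^\infty$; (ii) the subalgebra generated by $\{D_n\}_{n=1}^\infty$; (iii) the subalgebra generated by $\{\tilde G_n\}_{n=1}^\infty$.
   Context: Let $\mathbb F$ be a field and let $q\in\mathbb F$ be nonzero and not a root of unity. Let $[m]_q=(q^m-q^{-m})/(q-q^{-1})$. Let $\mathbb V$ be the free associative $\mathbb F$-algebra on noncommuting $x,y$, with basis the words (including $1$). Juxtaposition denotes concatenation. Set $\langle x,x\rangle=\langle y,y\rangle=2$ and $\langle x,y\rangle=\langle y,x\rangle=-2$. The $q$-shuffle product $\star$ is the bilinear product determined as follows: - $1\star v=v\star 1=v$; - for nontrivial words $u=u_1\cdots u_r$ and $v=v_1\cdots v_s$, $$u\star v=u_1((u_2\cdots u_r)\star v)+v_1(u\star(v_2\cdots v_s))q^{\langle u_1,v_1\rangle+\cdots+\langle u_r,v_1\rangle}.$$ This makes $\mathbb V$ an associative algebra, the $q$-shuffle algebra. Subalgebras are taken with respect to $\star$. For $k\in\mathbb N$, let $\tilde G_k=xyxy\cdots xy$ be the word of length $2k$, with $\tilde G_0=1$. Define $D_0=1$ and, for $n\ge1$, define $D_n$ recursively by $\sum_{i=0}^n D_i\star\tilde G_{n-i}=0$. Let $\overline x=1$ and $\overline y=-1$. A word $v_1\cdots v_m$ is Catalan if $\overline v_1+\cdots+\overline v_i\ge0$ for $1\le i\le m-1$ and $\overline v_1+\cdots+\overline v_m=0$. For $n\in\mathbb N$, $$C_n=\sum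 v_1\cdots v_{2n}\,[1]_q[1+\overline v_1]_q\cdots[1+\overline v_1+\cdots+\overline v_{2n}]_q,$$ where the sum is over Catalan words of length $2n$. *)

From mathcomp Require Import all_boot all_order all_algebra.
Set Implicit Arguments. Unset Strict Implicit. Unset Printing Implicit Defensive.
Import Order.TTheory GRing.Theory Num.Theory.
Local Open Scope ring_scope.

(* Words in x,y : x = true, y = false. *)
Definition word := seq bool.

Section QShuffle.
Variables (F : fieldType) (q : F).

(* An element of V is represented by a finite formal sum: a list of
   (coefficient, word) pairs; its value is the coefficient function [ev]. *)
Definition Vrep := seq (F * word).

Definition ev (p : Vrep) (w : word) : F := \sum_(e <- p | e.2 == w) e.1.

Definition Vone : Vrep := [:: (1, [::])].

Definition Vscale (c : F) (p : Vrep) : Vrep := [seq (c * e.1, e.2) | e <- p].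

Definition bil (a b : bool) : int := if a == b then 2 else -2.
Definition expo (u : word) (b : bool) : int := \sum_(a <- u) bil a b.

Fixpoint wstar (u : word) : word -> Vrep :=
  match u with
  | [::] => fun v => [:: (1, v)]
  | a :: u' =>
      fix g (v : word) : Vrep :=
        match v with
        | [::] => [:: (1, a :: u')]
        | b :: v' =>
            [seq (c.1, a :: c.2) | c <- wstar u' v] ++
            [seq (c.1 * q ^ (expo (a :: u') b), b :: c.2) | c <- g v']
        end
  end.

Definition Vstar (p r : Vrep) : Vrep :=
  flatten [seq [seq (c.1 * d.1 * e.1, e.2) | e <- wstar c.2 d.2] | c <- p, d <- r].

(* product g_{i_1+1} * ... * g_{i_k+1} of generators (indices >= 1) *)
Definition Vprod (g : nat -> Vrep) (l : seq nat) : Vrep :=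
  foldr (fun i acc => Vstar (g i.+1) acc) Vone l.

(* p lies in the (unital) subalgebra generated by {g n}_{n >= 1}:
   p is a linear combination of finite star-products of generators. *)
Definition in_subalg (g : nat -> Vrep) (p : Vrep) : Prop :=
  exists L : seq (F * seq nat),
    ev p =1 ev (flatten [seq Vscale c.1 (Vprod g c.2) | c <- L]).

Definition Gt (n : nat) : Vrep := [:: (1, flatten (nseq n [:: true; false]))].

Definition bar (b : bool) : int := if b then 1 else -1.
Definition psum (w : word) (i : nat) : int := \sum_(j < i) bar (nth false w j).
Definition catalan (w : word) : bool :=
  all (fun i => 0 <= psum w i) (iota 1 (size w).-1) && (psum w (size w) == 0).

Definition qint (m : int) : F := (q ^ m - q ^ (- m)) / (q - q^-1).

Fixpoint allwords (k : nat) : seq word :=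
  if k is k'.+1 then [seq b :: w | b <- [:: true; false], w <- allwords k']
  else [:: [::]].

Definition Ccoef (w : word) : F := \prod_(i < (size w).+1) qint (1 + psum w i).

Definition Cn (n : nat) : Vrep :=
  [seq (Ccoef w, w) | w <- allwords (2 * n) & catalan w].

End QShuffle.

(* Read a word in x, y as a lattice path (x up, y down) and give a
   step that ends at height h the weight [1 + h]_q.  Then C_n is the sum of all
   words of length 2n weighted by the paths from 0 to 0: a path that dips below 0
   passes a step weighted [0]_q = 0.  An induction on the word w shows that the
   coefficient of w in
     sum_(i <= N) ((q^2)^i (-q)^(N-i) - (q^-2)^i (-q^-1)^(N-i)) G~_i * C_(N-i)
   vanishes; the induction has to carry the paths of arbitrary starting height
   and the products y G~_i * (paths) along.  As q is not a root of unity, the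
   extreme coefficients of this identity are nonzero, so by induction on N each
   C_N lies in the subalgebra generated by the G~_i and conversely.  The
   recursion sum_i D_i * G~_(n-i) = 0 does the same for D_n and G~_n. *)

From Pilot Require Import Defs.
From mathcomp Require Import all_boot all_order all_algebra.
From mathcomp Require Import zify ring.
Set Implicit Arguments. Unset Strict Implicit. Unset Printing Implicit Defensive.
Import Order.TTheory GRing.Theory Num.Theory.
Local Open Scope ring_scope.

Section Pairing.
Variable F : fieldType.
Implicit Types (p r : Vrep F) (f g : word -> F).

Definition Vpair p f : F := \sum_(c <- p) c.1 * f c.2.

Definition Veq p r := forall f, Vpair p f = Vpair r f.

Definition delta (w : word) : word -> F := fun u => (u == w)%:R.

Lemma Vpair_seq1 c f : Vpair [:: c] f = c.1 * f c.2.
Proof. by rewrite /Vpair big_seq1. Qed.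

Lemma Vpair_cat p r f : Vpair (p ++ r) f = Vpair p f + Vpair r f.
Proof. by rewrite /Vpair big_cat. Qed.

Lemma Vpair_flatten (s : seq (Vrep F)) f :
  Vpair (flatten s) f = \sum_(p <- s) Vpair p f.
Proof. by rewrite /Vpair big_flatten. Qed.

Lemma Vpair_scale a p f : Vpair (Vscale a p) f = a * Vpair p f.
Proof.
by rewrite /Vpair big_map mulr_sumr; apply: eq_bigr => c _; rewrite mulrA.
Qed.

Lemma eq_Vpair p f g : f =1 g -> Vpair p f = Vpair p g.
Proof. by move=> fg; apply: eq_bigr => c _; rewrite fg. Qed.

Lemma eq_in_Vpair p f g :
  (forall c, c \in p -> f c.2 = g c.2) -> Vpair p f = Vpair p g.
Proof. by move=> fg; apply: eq_big_seq => c /fg ->. Qed.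

Lemma VpairDf p f g : Vpair p (fun u => f u + g u) = Vpair p f + Vpair p g.
Proof. by rewrite /Vpair -big_split; apply: eq_bigr => c _; rewrite mulrDr. Qed.

Lemma VpairMf p a f : Vpair p (fun u => a * f u) = a * Vpair p f.
Proof. by rewrite /Vpair mulr_sumr; apply: eq_bigr => c _; rewrite mulrCA. Qed.

Lemma Vpair0f p : Vpair p (fun=> 0) = 0.
Proof. by rewrite /Vpair big1 // => c _; rewrite mulr0. Qed.

Lemma Vpair_sumf p (I : Type) (s : seq I) (f : I -> word -> F) :
  Vpair p (fun u => \sum_(i <- s) f i u) = \sum_(i <- s) Vpair p (f i).
Proof. by rewrite /Vpair exchange_big; apply: eq_bigr => c _; rewrite mulr_sumr. Qed.

Lemma Vpair_exchange p r (h : word -> word -> F) :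
  Vpair p (fun u => Vpair r (h u)) = Vpair r (fun v => Vpair p (h^~ v)).
Proof.
rewrite /Vpair; under eq_bigr do rewrite mulr_sumr.
rewrite exchange_big; apply: eq_bigr => d _; rewrite mulr_sumr.
by apply: eq_bigr => c _; rewrite mulrCA.
Qed.

Lemma ev_Vpair p w : ev p w = Vpair p (delta w).
Proof.
rewrite /ev /Vpair big_mkcond; apply: eq_bigr => c _.
by rewrite /delta; case: eqP; rewrite ?mulr1 ?mulr0.
Qed.

Lemma Vpair_ev p (s : seq word) f : uniq s -> {subset map snd p <= s} ->
  Vpair p f = \sum_(w <- s) ev p w * f w.
Proof.
move=> s_uniq p_s; under [RHS]eq_bigr do rewrite /ev mulr_suml.
rewrite (exchange_big_dep xpredT) //=; apply: eq_big_seq => c c_p.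
rewrite (eq_bigl (pred1 c.2)) => [|w]; last exact: eq_sym.
by rewrite -big_filter filter_pred1_uniq ?big_seq1 //; apply/p_s/map_f.
Qed.

Lemma VeqP p r : Veq p r <-> ev p =1 ev r.
Proof.
split=> [pr w | pr f]; first by rewrite !ev_Vpair pr.
pose s := undup (map snd (p ++ r)).
have [p_s r_s] : {subset map snd p <= s} /\ {subset map snd r <= s}.
  by split=> w w_t; rewrite mem_undup map_cat mem_cat w_t ?orbT.
rewrite !(@Vpair_ev _ s) ?undup_uniq //.
by apply: eq_bigr => w _; rewrite pr.
Qed.

Lemma Veq_sym p r : Veq p r -> Veq r p.
Proof. by move=> pr f; rewrite pr. Qed.

Lemma Veq_trans p r t : Veq p r -> Veq r t -> Veq p t.
Proof. by move=> pr rt f; rewrite pr rt. Qed.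
End Pairing.

Section Shuffle.
Variables (F : fieldType) (q : F).
Hypothesis q_neq0 : q != 0.

Local Notation wstar := (wstar q).
Local Notation Vstar := (Vstar q).
Implicit Types (u v t : word) (p r s : Vrep F) (f : word -> F).

Lemma expo_nil b : expo [::] b = 0.
Proof. by rewrite /expo big_nil. Qed.

Lemma expo_cons a u b : expo (a :: u) b = bil a b + expo u b.
Proof. by rewrite /expo big_cons. Qed.

Lemma wstar_nil_r u : wstar u [::] = [:: (1, u)].
Proof. by case: u. Qed.

Lemma Vpair_wstar_nil_l v f : Vpair (wstar [::] v) f = f v.
Proof. by rewrite Vpair_seq1 mul1r. Qed.

Lemma Vpair_wstar_nil_r u f : Vpair (wstar u [::]) f = f u.
Proof. by rewrite wstar_nil_r Vpair_seq1 mul1r. Qed.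

Lemma Vpair_wstar_cons a u b v f :
  Vpair (wstar (a :: u) (b :: v)) f =
  Vpair (wstar u (b :: v)) (fun e => f (a :: e)) +
  q ^ expo (a :: u) b * Vpair (wstar (a :: u) v) (fun e => f (b :: e)).
Proof.
rewrite Vpair_cat /Vpair !big_map mulr_sumr; congr (_ + _).
by apply: eq_bigr => c _ /=; rewrite mulrAC mulrC.
Qed.

Lemma expo_wstar u v x c : c \in wstar u v -> expo c.2 x = expo u x + expo v x.
Proof.
elim: u v c => [|a u IHu] v c.
  by rewrite inE => /eqP -> /=; rewrite expo_nil add0r.
elim: v c => [|b v IHv] c.
  by rewrite wstar_nil_r inE => /eqP -> /=; rewrite expo_nil addr0.
rewrite mem_cat => /orP[] /mapP[d d_in ->] /=.
  by rewrite !expo_cons (IHu _ _ d_in) expo_cons addrA.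
by rewrite expo_cons (IHv _ d_in) !expo_cons; lia.
Qed.

Lemma Vpair_wstar_consl u v a c t f :
  Vpair (wstar u v) (fun e => Vpair (wstar (a :: e) (c :: t)) f) =
  Vpair (wstar u v) (fun e => Vpair (wstar e (c :: t)) (fun x => f (a :: x))) +
  q ^ (bil a c + expo u c + expo v c) *
    Vpair (wstar u v) (fun e => Vpair (wstar (a :: e) t) (fun x => f (c :: x))).
Proof.
rewrite -VpairMf -VpairDf; apply: eq_in_Vpair => d d_in.
by rewrite Vpair_wstar_cons expo_cons (expo_wstar _ d_in) addrA.
Qed.

Lemma Vpair_wstar_consr p a u b f :
  Vpair p (fun e => Vpair (wstar (a :: u) (b :: e)) f) =
  Vpair p (fun e => Vpair (wstar u (b :: e)) (fun x => f (a :: x))) +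
  q ^ expo (a :: u) b * Vpair p (fun e => Vpair (wstar (a :: u) e) (fun x => f (b :: x))).
Proof. by rewrite -VpairMf -VpairDf; apply: eq_Vpair => e; rewrite Vpair_wstar_cons. Qed.

Lemma wstar_assoc_pair u v t f :
  Vpair (wstar u v) (fun e => Vpair (wstar e t) f) =
  Vpair (wstar v t) (fun e => Vpair (wstar u e) f).
Proof.
have [n] := ubnP (size u + size v + size t); elim: n => // n IH in u v t f *.
case: u => [|a u] size_uvt.
  by rewrite Vpair_wstar_nil_l; apply: eq_Vpair => e; rewrite Vpair_wstar_nil_l.
case: v size_uvt => [|b v] size_uvt; first by rewrite Vpair_wstar_nil_r Vpair_wstar_nil_l.
case: t size_uvt => [|c t] size_uvt.
  by rewrite Vpair_wstar_nil_r; apply: eq_Vpair => e; rewrite Vpair_wstar_nil_r.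
move: size_uvt; rewrite /= !addSn !addnS !ltnS => size_uvt.
rewrite Vpair_wstar_cons [RHS]Vpair_wstar_cons !Vpair_wstar_consl !Vpair_wstar_consr.
have expo_c : forall x, x = expo (a :: u) c + expo (b :: v) c -> q ^ x =
    q ^ expo (a :: u) c * q ^ expo (b :: v) c by move=> x ->; rewrite expfzDr.
rewrite [q ^ (_ + expo u c + _)]expo_c; last by rewrite !expo_cons; lia.
rewrite [q ^ (_ + _ + expo v c)]expo_c; last by rewrite !expo_cons; lia.
rewrite (IH u (b :: v) (c :: t)) ?Vpair_wstar_cons /=; last lia.
rewrite (IH (a :: u) v (c :: t)) /=; last lia.
have <- : Vpair (wstar (a :: u) (b :: v)) (fun e => Vpair (wstar e t) (fun x => f (c :: x))) =
    Vpair (wstar (b :: v) t) (fun e => Vpair (wstar (a :: u) e) (fun x => f (c :: x))).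
  by apply: IH => /=; lia.
rewrite Vpair_wstar_cons; ring.
Qed.

Lemma Vpair_Vstar p r f :
  Vpair (Vstar p r) f = Vpair p (fun u => Vpair r (fun v => Vpair (wstar u v) f)).
Proof.
rewrite /Vstar Vpair_flatten big_allpairs_dep /Vpair; apply: eq_bigr => c _.
rewrite mulr_sumr; apply: eq_bigr => d _.
rewrite big_map !mulr_sumr; apply: eq_bigr => e _ /=.
by rewrite !mulrA.
Qed.

Lemma Vpair_Vstar_word u r f :
  Vpair (Vstar [:: (1, u)] r) f = Vpair r (fun v => Vpair (wstar u v) f).
Proof. by rewrite Vpair_Vstar Vpair_seq1 mul1r. Qed.

Lemma Vstar_assoc p r s : Veq (Vstar (Vstar p r) s) (Vstar p (Vstar r s)).
Proof.
move=> f; rewrite !Vpair_Vstar; apply: eq_Vpair => u; rewrite Vpair_Vstar.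
apply: eq_Vpair => v; rewrite Vpair_exchange.
by apply: eq_Vpair => t; apply: wstar_assoc_pair.
Qed.

Lemma Vstar_Veq p p' r r' : Veq p p' -> Veq r r' -> Veq (Vstar p r) (Vstar p' r').
Proof. by move=> pp' rr' f; rewrite !Vpair_Vstar pp'; apply: eq_Vpair => u. Qed.

Lemma Vstar1r p : Veq (Vstar p (Vone F)) p.
Proof.
move=> f; rewrite Vpair_Vstar; apply: eq_Vpair => u.
by rewrite Vpair_seq1 mul1r Vpair_wstar_nil_r.
Qed.

Lemma Vstar1l r : Veq (Vstar (Vone F) r) r.
Proof. by move=> f; rewrite Vpair_Vstar_word; apply: eq_Vpair => v; rewrite Vpair_wstar_nil_l. Qed.

End Shuffle.

Section Subalgebra.
Variables (F : fieldType) (q : F).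
Hypothesis q_neq0 : q != 0.

Section Generators.
Variable g : nat -> Vrep F.

Local Notation Vstar := (Vstar q).
Local Notation subalg := (in_subalg q g).
Implicit Types (p r : Vrep F) (L : seq (F * seq nat)).

Definition Vcomb L : Vrep F := flatten [seq Vscale c.1 (Vprod q g c.2) | c <- L].

Lemma Vpair_Vcomb L f : Vpair (Vcomb L) f = \sum_(c <- L) c.1 * Vpair (Vprod q g c.2) f.
Proof. by rewrite Vpair_flatten big_map; apply: eq_bigr => c _; rewrite Vpair_scale. Qed.

Lemma in_subalgE p : subalg p <-> exists L, Veq p (Vcomb L).
Proof. by split=> -[L pL]; exists L; apply/VeqP. Qed.

Lemma in_subalg_Veq p r : Veq p r -> subalg r -> subalg p.
Proof. by move=> pr /in_subalgE[L rL]; apply/in_subalgE; exists L; apply: Veq_trans rL. Qed.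

Lemma in_subalg_cat p r : subalg p -> subalg r -> subalg (p ++ r).
Proof.
move=> /in_subalgE[L1 pL1] /in_subalgE[L2 rL2]; apply/in_subalgE; exists (L1 ++ L2) => f.
by rewrite Vpair_cat pL1 rL2 !Vpair_Vcomb big_cat.
Qed.

Lemma in_subalg_scale a p : subalg p -> subalg (Vscale a p).
Proof.
move=> /in_subalgE[L pL]; apply/in_subalgE; exists [seq (a * c.1, c.2) | c <- L] => f.
rewrite Vpair_scale pL !Vpair_Vcomb big_map mulr_sumr.
by apply: eq_bigr => c _; rewrite mulrA.
Qed.

Lemma in_subalg_flatten (s : seq (Vrep F)) :
  (forall p, p \in s -> subalg p) -> subalg (flatten s).
Proof.
elim: s => [_|p s IHs s_sub] /=; first by apply/in_subalgE; exists [::].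
apply: in_subalg_cat; first by apply: s_sub; rewrite mem_head.
by apply: IHs => r r_s; apply: s_sub; rewrite inE r_s orbT.
Qed.

Lemma in_subalg1 : subalg (Vone F).
Proof. by apply/in_subalgE; exists [:: (1, [::])] => f; rewrite Vpair_Vcomb big_seq1 mul1r. Qed.

Lemma in_subalg_genM i p : subalg p -> subalg (Vstar (g i.+1) p).
Proof.
move=> /in_subalgE[L pL]; apply/in_subalgE; exists [seq (c.1, i :: c.2) | c <- L].
apply: (Veq_trans (Vstar_Veq q (fun=> erefl) pL)) => f.
rewrite Vpair_Vstar Vpair_Vcomb big_map.
under eq_Vpair => u do rewrite Vpair_Vcomb.
rewrite Vpair_sumf; apply: eq_bigr => c _ /=.
by rewrite VpairMf Vpair_Vstar.
Qed.

Lemma in_subalg_gen i : subalg (g i.+1).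
Proof. by apply: (in_subalg_Veq (Veq_sym (Vstar1r q _))); apply/in_subalg_genM/in_subalg1. Qed.

Lemma in_subalgM p r : subalg p -> subalg r -> subalg (Vstar p r).
Proof.
move=> /in_subalgE[L pL] r_in.
apply: (in_subalg_Veq (Vstar_Veq q pL (fun=> erefl))).
have prod_r l : subalg (Vstar (Vprod q g l) r).
  elim: l => [|i l IHl] /=; first exact: in_subalg_Veq (Vstar1l q _) r_in.
  exact/(in_subalg_Veq (Vstar_assoc q_neq0 _ _ _))/in_subalg_genM.
apply: (@in_subalg_Veq _ (flatten [seq Vscale c.1 (Vstar (Vprod q g c.2) r) | c <- L])).
  move=> f; rewrite Vpair_Vstar Vpair_Vcomb Vpair_flatten big_map.
  by apply: eq_bigr => c _; rewrite Vpair_scale Vpair_Vstar.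
by apply: in_subalg_flatten => _ /mapP[c _ ->]; apply/in_subalg_scale.
Qed.

Lemma in_subalg_lincomb (I : eqType) (s : seq I) (a : I -> F) (X : I -> Vrep F) p :
    (forall i, i \in s -> subalg (X i)) ->
    (forall w, ev p w = \sum_(i <- s) a i * ev (X i) w) ->
  subalg p.
Proof.
move=> X_in pX; apply: (@in_subalg_Veq _ (flatten [seq Vscale (a i) (X i) | i <- s])).
  apply/VeqP => w; rewrite pX ev_Vpair Vpair_flatten big_map.
  by apply: eq_bigr => i _; rewrite Vpair_scale ev_Vpair.
by apply: in_subalg_flatten => _ /mapP[i i_s ->]; apply/in_subalg_scale/X_in.
Qed.

End Generators.

Lemma in_subalg_trans (g g' : nat -> Vrep F) :
  (forall i, in_subalg q g (g' i.+1)) ->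
  forall p, in_subalg q g' p -> in_subalg q g p.
Proof.
move=> g'_in p /in_subalgE[L pL]; apply: (in_subalg_Veq pL).
apply: in_subalg_flatten => _ /mapP[c _ ->]; apply: in_subalg_scale.
by elim: c.2 => [|i l IHl] /=; [apply: in_subalg1 | apply: in_subalgM].
Qed.

End Subalgebra.

Section LatticePaths.
Variables (F : fieldType) (q : F).

Local Notation wstar := (wstar q).
Local Notation qint := (qint q).
Implicit Types (h : int) (u v w : word) (f X : word -> F).

Fixpoint path_weight h w : F :=
  if w is b :: w' then qint (1 + (h + bar b)) * path_weight (h + bar b) w'
  else (h == 0)%:R.

Definition Paths (L : nat) h : Vrep F := [seq (path_weight h w, w) | w <- allwords L].

Lemma Vpair_Paths L h f : Vpair (Paths L h) f = \sum_(w <- allwords L) path_weight h w * f w.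
Proof. by rewrite /Vpair big_map. Qed.

Lemma Vpair_Paths0 h f : Vpair (Paths 0 h) f = (h == 0)%:R * f [::].
Proof. by rewrite Vpair_Paths big_seq1. Qed.

Lemma Vpair_PathsS L h f :
  Vpair (Paths L.+1 h) f = \sum_(b <- [:: true; false])
    qint (1 + (h + bar b)) * Vpair (Paths L (h + bar b)) (fun w => f (b :: w)).
Proof.
rewrite Vpair_Paths big_allpairs_dep; apply: eq_bigr => b _.
by rewrite Vpair_Paths mulr_sumr; apply: eq_bigr => w _; rewrite mulrA.
Qed.

Lemma Vpair_Paths_head L h a X :
  Vpair (Paths L h) (fun v => if v is b :: v' then (b == a)%:R * X v' else 0) =
  if L is L'.+1 then qint (1 + (h + bar a)) * Vpair (Paths L' (h + bar a)) X else 0.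
Proof.
case: L => [|L]; first by rewrite Vpair_Paths0 mulr0.
rewrite Vpair_PathsS big_cons big_seq1.
by case: a; rewrite /= !VpairMf mul0r mul1r mulr0 ?addr0 ?add0r.
Qed.

Lemma delta_cons a b w v : delta F (a :: w) (b :: v) = (b == a)%:R * delta F w v.
Proof. by rewrite /delta eqseq_cons; case: (b == a); rewrite ?mul1r ?mul0r. Qed.

Lemma Vpair_wstar_delta u v a w :
  Vpair (wstar u v) (delta F (a :: w)) =
  (if u is b :: u' then (b == a)%:R * Vpair (wstar u' v) (delta F w) else 0) +
  (if v is b :: v' then (b == a)%:R * q ^ expo u a * Vpair (wstar u v') (delta F w)
   else 0).
Proof.
case: u => [|b u]; case: v => [|c v].
- by rewrite Vpair_wstar_nil_l /delta add0r.
- by rewrite !Vpair_wstar_nil_l expo_nil expr0z mulr1 delta_cons add0r.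
- by rewrite !Vpair_wstar_nil_r delta_cons addr0.
rewrite Vpair_wstar_cons (eq_Vpair _ (delta_cons a b w)).
rewrite (eq_Vpair _ (delta_cons a c w)) !VpairMf.
by case: (c =P a) => [->|_]; rewrite ?mul1r // !mul0r mulr0.
Qed.

Lemma Vpair_wstar_delta_nil u v :
  Vpair (wstar u v) (delta F [::]) = ((u == [::]) && (v == [::]))%:R.
Proof.
case: u => [|b u]; first by rewrite Vpair_wstar_nil_l.
case: v => [|c v]; first by rewrite Vpair_wstar_nil_r.
by rewrite Vpair_wstar_cons !Vpair0f mulr0 addr0.
Qed.

Lemma Vpair_Paths_wstar u L h a w :
  Vpair (Paths L h) (fun v => Vpair (wstar u v) (delta F (a :: w))) =
  (if u is b :: u' then
     (b == a)%:R * Vpair (Paths L h) (fun v => Vpair (wstar u' v) (delta F w))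
   else 0) +
  (if L is L'.+1 then q ^ expo u a * (qint (1 + (h + bar a)) *
     Vpair (Paths L' (h + bar a)) (fun v => Vpair (wstar u v) (delta F w)))
   else 0).
Proof.
under eq_Vpair do rewrite Vpair_wstar_delta.
rewrite VpairDf; congr (_ + _); first by case: u => [|b u]; rewrite ?Vpair0f ?VpairMf.
transitivity (Vpair (Paths L h) (fun v => q ^ expo u a *
    if v is b :: v' then (b == a)%:R * Vpair (wstar u v') (delta F w) else 0)).
  by apply: eq_Vpair => -[|b v]; rewrite ?mulr0 // -mulrA mulrCA.
by rewrite VpairMf Vpair_Paths_head; case: L => [|L]; rewrite ?mulr0.
Qed.

Definition Gword (m : nat) : word := flatten (nseq m [:: true; false]).

Lemma GwordS m : Gword m.+1 = true :: false :: Gword m.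
Proof. by []. Qed.

Lemma expo_Gword m a : expo (Gword m) a = 0.
Proof. by elim: m => [|m IHm]; rewrite ?expo_nil // !expo_cons IHm /bil; case: (a). Qed.

Definition cG m h L w := ev (Vstar q (Gt F m) (Paths L h)) w.
Definition cyG m h L w := ev (Vstar q [:: (1, false :: Gword m)] (Paths L h)) w.

Lemma cGE m h L w : cG m h L w = Vpair (Paths L h) (fun v => Vpair (wstar (Gword m) v) (delta F w)).
Proof. by rewrite /cG ev_Vpair Vpair_Vstar_word. Qed.

Lemma cyGE m h L w :
  cyG m h L w = Vpair (Paths L h) (fun v => Vpair (wstar (false :: Gword m) v) (delta F w)).
Proof. by rewrite /cyG ev_Vpair Vpair_Vstar_word. Qed.

Lemma qint_up h : qint (1 + (h + bar true)) = qint (h + 2).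
Proof. by congr qint; rewrite /bar; lia. Qed.

Lemma qint_down h : qint (1 + (h + bar false)) = qint h.
Proof. by congr qint; rewrite /bar; lia. Qed.

Lemma cG_true m h L w : cG m h L (true :: w) =
  (if m is m'.+1 then cyG m' h L w else 0) +
  (if L is L'.+1 then qint (h + 2) * cG m (h + 1) L' w else 0).
Proof.
rewrite cGE Vpair_Paths_wstar qint_up; congr (_ + _).
  by case: m => [|m] //; rewrite GwordS /= mul1r cyGE.
by case: L => [|L] //; rewrite expo_Gword expr0z mul1r cGE.
Qed.

Lemma cG_false m h L w : cG m h L (false :: w) =
  if L is L'.+1 then qint h * cG m (h - 1) L' w else 0.
Proof.
rewrite cGE Vpair_Paths_wstar qint_down expo_Gword expr0z.
have -> : (if Gword m is b :: u' then (b == false)%:R *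
            Vpair (Paths L h) (fun v => Vpair (wstar u' v) (delta F (w))) else 0) = 0.
  by case: m => [|m] //; rewrite GwordS mul0r.
by case: L => [|L]; rewrite ?add0r // mul1r cGE.
Qed.

Lemma cyG_true m h L w : cyG m h L (true :: w) =
  if L is L'.+1 then (q ^+ 2)^-1 * (qint (h + 2) * cyG m (h + 1) L' w) else 0.
Proof.
rewrite cyGE Vpair_Paths_wstar qint_up mul0r add0r.
by case: L => [|L] //; rewrite expo_cons expo_Gword addr0 cyGE.
Qed.

Lemma cyG_false m h L w : cyG m h L (false :: w) =
  cG m h L w + (if L is L'.+1 then q ^+ 2 * (qint h * cyG m (h - 1) L' w) else 0).
Proof.
rewrite cyGE Vpair_Paths_wstar qint_down mul1r -cGE.
by case: L => [|L] //; rewrite expo_cons expo_Gword addr0 cyGE.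
Qed.

Lemma cG_nil m h L : cG m h L [::] = ((m == 0)%N && (L == 0)%N && (h == 0))%:R.
Proof.
rewrite cGE; under eq_Vpair do rewrite Vpair_wstar_delta_nil.
case: m => [|m]; last by rewrite Vpair0f.
case: L => [|L]; first by rewrite Vpair_Paths0 /= mulr1.
rewrite Vpair_PathsS big1 // => b _.
by rewrite (@eq_Vpair _ _ _ (fun=> 0)) ?Vpair0f ?mulr0.
Qed.

Lemma cyG_nil m h L : cyG m h L [::] = 0.
Proof. by rewrite cyGE; under eq_Vpair do rewrite Vpair_wstar_delta_nil; rewrite Vpair0f. Qed.

End LatticePaths.

Section PathSums.
Variables (F : fieldType) (q : F).

Local Notation qint := (qint q).
Local Notation cG := (cG q).
Local Notation cyG := (cyG q).
Local Notation Paths := (Paths q).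
Implicit Types (w : word).

Lemma size_allwords L w : w \in allwords L -> size w = L.
Proof.
elim: L w => [|L IHL] w; first by rewrite inE => /eqP ->.
by move=> /allpairsPdep[b [v [_ v_in ->]]] /=; rewrite (IHL _ v_in).
Qed.

Lemma path_weight_high (h : int) w : (size w)%:Z < h -> path_weight q h w = 0.
Proof.
elim: w h => [|b w IHw] h /= size_lt; first by move: size_lt; case: eqP => // ->.
by rewrite IHw ?mulr0 //; move: size_lt; rewrite /bar; case: b; lia.
Qed.

Lemma Vpair_Paths_high L (h : int) f : L%:Z < h -> Vpair (Paths L h) f = 0.
Proof.
move=> L_lt; rewrite Vpair_Paths big1_seq // => w /andP[_ w_in].
by rewrite path_weight_high ?mul0r // (size_allwords w_in).
Qed.

Lemma cG_high m (h : int) L w : L%:Z < h -> cG m h L w = 0.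
Proof. by move=> L_lt; rewrite cGE Vpair_Paths_high. Qed.

Lemma cyG_high m (h : int) L w : L%:Z < h -> cyG m h L w = 0.
Proof. by move=> L_lt; rewrite cyGE Vpair_Paths_high. Qed.

Lemma qint0 : qint 0 = 0.
Proof. by rewrite /Defs.qint oppr0 subrr mul0r. Qed.

Definition Gsum (h N : nat) (a b : F) w : F :=
  \sum_(j < N.+1) a ^+ (N - j) * b ^+ j * cG (N - j) h (h + j.*2) w.

Definition yGsum (h N : nat) (a b : F) w : F :=
  \sum_(j < N.+1) a ^+ (N - j) * b ^+ j * cyG (N - j) h (h + j.*2) w.

Lemma Gsum_nil h N a b : Gsum h N a b [::] = ((h == 0)%N && (N == 0)%N)%:R.
Proof.
rewrite /Gsum; case: N => [|N].
  by rewrite big_ord1 cG_nil /= expr0 !mul1r; case: h.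
rewrite andbF big1 // => -[[|j] ?] _; rewrite cG_nil /=; first by rewrite subn0 !mulr0.
by rewrite addnS /= andbF !mulr0.
Qed.

Lemma yGsum_nil h N a b : yGsum h N a b [::] = 0.
Proof. by rewrite /yGsum big1 // => j _; rewrite cyG_nil mulr0. Qed.

Lemma Gsum_false h N a b w : Gsum h N a b (false :: w) = qint h * Gsum h.-1 N a b w.
Proof.
rewrite /Gsum mulr_sumr; apply: eq_bigr => j _; rewrite cG_false.
case: h => [|h]; first by case: (0 + j.*2)%N => [|L]; rewrite qint0 ?mulr0 ?mul0r ?mulr0.
by rewrite addSn /= (_ : h.+1%:Z - 1 = h); [rewrite mulrCA | lia].
Qed.

Lemma yGsum_false h N a b w : yGsum h N a b (false :: w) =
  Gsum h N a b w + q ^+ 2 * qint h * yGsum h.-1 N a b w.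
Proof.
rewrite /yGsum /Gsum mulr_sumr -big_split; apply: eq_bigr => j _ /=; rewrite cyG_false.
case: h => [|h]; first by case: (0 + j.*2)%N => [|L]; rewrite qint0; ring.
by rewrite addSn /= (_ : h.+1%:Z - 1 = h); [ring | lia].
Qed.

Lemma Gsum0_true h a b w : Gsum h 0 a b (true :: w) = 0.
Proof.
rewrite /Gsum big_ord1 /= cG_true.
case: h => [|h] /=; first by rewrite addr0 mulr0.
by rewrite addn0 cG_high ?mulr0 ?add0r ?mulr0 //; lia.
Qed.

Lemma yGsum0_true h a b w : yGsum h 0 a b (true :: w) = 0.
Proof.
rewrite /yGsum big_ord1 /= cyG_true.
by case: h => [|h] //=; rewrite ?mulr0 // addn0 cyG_high ?mulr0 //; lia.
Qed.

Lemma Gsum_true h N a b w : Gsum h N.+1 a b (true :: w) =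
  a * yGsum h N a b w + qint (h%:Z + 2) * b * Gsum h.+1 N a b w.
Proof.
rewrite /Gsum; under eq_bigr => j _ do rewrite cG_true mulrDr.
rewrite big_split /=; congr (_ + _).
  rewrite big_ord_recr /= subnn mulr0 addr0 /yGsum mulr_sumr; apply: eq_bigr => j _ /=.
  by rewrite subSn ?exprS; [ring | rewrite -ltnS].
rewrite big_ord_recl /= addn0.
have -> : (if h is L'.+1 then qint (h%:Z + 2) * cG N.+1 (h%:Z + 1) L' w else 0) = 0.
  by case: h => [|h] //; rewrite cG_high ?mulr0 //; lia.
rewrite mulr0 add0r mulr_sumr; apply: eq_bigr => j _.
rewrite /bump /= add1n subSS doubleS !addnS (_ : h%:Z + 1 = h.+1) ?addSn ?exprS; [ring | lia].
Qed.

Lemma yGsum_true h N a b w : yGsum h N.+1 a b (true :: w) =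
  (q ^+ 2)^-1 * qint (h%:Z + 2) * b * yGsum h.+1 N a b w.
Proof.
rewrite /yGsum; under eq_bigr => j _ do rewrite cyG_true.
rewrite big_ord_recl /= addn0.
have -> : (if h is L'.+1 then (q ^+ 2)^-1 * (qint (h%:Z + 2) * cyG N.+1 (h%:Z + 1) L' w)
           else 0) = 0.
  by case: h => [|h] //; rewrite cyG_high ?mulr0 //; lia.
rewrite mulr0 add0r mulr_sumr; apply: eq_bigr => j _.
rewrite /bump /= add1n subSS doubleS !addnS (_ : h%:Z + 1 = h.+1) ?addSn ?exprS.
  by ring.
lia.
Qed.

End PathSums.

Section Defects.
Variables (F : fieldType) (q : F).
Hypotheses (q_neq0 : q != 0) (q_neq_qV : q - q^-1 != 0).

Local Notation qint := (qint q).
Local Notation Gsum := (Gsum q).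
Local Notation yGsum := (yGsum q).

Lemma qint_add2 (n : nat) : qint (n%:Z + 2) = qint n.+2.
Proof. by congr qint; lia. Qed.

Lemma qint_add1 (n : nat) : qint (n%:Z + 1) = qint n.+1.
Proof. by congr qint; lia. Qed.

Lemma qint_nat (n : nat) : qint n = (q ^+ n - (q ^+ n)^-1) / (q - q^-1).
Proof. by rewrite /Defs.qint -exprnN. Qed.

Lemma qq_sub1_neq0 : q * q - 1 != 0.
Proof.
apply: contraNneq q_neq_qV => qq1; apply/eqP.
have : q * (q - q^-1) = 0 by rewrite mulrBr mulfV.
by move/eqP; rewrite mulf_eq0 (negbTE q_neq0) => /eqP.
Qed.

Let a1 := q ^+ 2.
Let b1 := - q.
Let a2 := (q ^+ 2)^-1.
Let b2 := - q^-1.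

(* [defY N w] is the coefficient of [w] in the identity relating the G~_i and the
   C_j; [defI] and [defZ] are the companions that make the induction on [w] work. *)
Definition defY N w := Gsum 0 N a1 b1 w - Gsum 0 N a2 b2 w.
Definition defI k N w := yGsum k N a1 b1 w - q ^+ k * Gsum k.+1 N a1 b1 w.
Definition defZ k N w := q ^+ k.*2.+2 * Gsum k.+1 N a1 b1 w
   - q ^+ k.+1 * qint (k%:Z + 2) * Gsum k.+1 N a2 b2 w + qint (k%:Z + 1) * yGsum k N a2 b2 w.

Definition defects_vanish_at w :=
  forall N k, [/\ defY N w = 0, defI k N w = 0 & defZ k N w = 0].

Ltac qint_field :=
  rewrite ?qint_add2 ?qint_add1 ?qint0 !qint_nat -?addnn ?addSn ?addnS !exprS ?exprD ?expr0;
  field; rewrite ?q_neq0 ?qq_sub1_neq0 ?expf_neq0 ?mulf_neq0 ?invr_neq0 //=.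

Lemma defects_nil : defects_vanish_at [::].
Proof. by move=> N k; rewrite /defY /defI /defZ !Gsum_nil !yGsum_nil /=; split; ring. Qed.

Lemma defects_true w : defects_vanish_at w -> defects_vanish_at (true :: w).
Proof.
move=> IHw [|N] k.
  by rewrite /defY /defI /defZ !Gsum0_true !yGsum0_true; split; ring.
have [_ I0 Z0] := IHw N 0%N; have [_ Ik Zk] := IHw N k.+1.
split; rewrite /defY /defI /defZ ?yGsum_true !Gsum_true.
- transitivity (q ^+ 2 * defI 0 N w - (q ^+ 2)^-1 * defZ 0 N w).
    by rewrite /defI /defZ /a1 /a2 /b1 /b2; qint_field.
  by rewrite I0 Z0 !mulr0 subrr.
- transitivity ((- q^-1 * qint (k%:Z + 2) - q ^+ k.+2) * defI k.+1 N w).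
    by rewrite /defI /a1 /b1; qint_field.
  by rewrite Ik mulr0.
- transitivity (- (q ^+ 2)^-1 * qint (k%:Z + 2) * defZ k.+1 N w + q ^+ k.*2.+4 * defI k.+1 N w).
    by rewrite /defI /defZ /a1 /a2 /b1 /b2; qint_field.
  by rewrite Ik Zk !mulr0 addr0.
Qed.

Lemma defects_false w : defects_vanish_at w -> defects_vanish_at (false :: w).
Proof.
move=> IHw N k; have [Y0 _ _] := IHw N 0%N.
split; rewrite /defY /defI /defZ ?yGsum_false !Gsum_false.
- by rewrite qint0 !mul0r subrr.
- case: k => [|k]; first by rewrite qint0; qint_field.
  have [_ Ik _] := IHw N k.
  transitivity (q ^+ 2 * qint k.+1 * defI k N w); first by rewrite /defI /=; qint_field.
  by rewrite Ik mulr0.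
- case: k => [|k].
    transitivity (q ^+ 2 * defY N w); first by rewrite /defY /=; qint_field.
    by rewrite Y0 mulr0.
  have [_ _ Zk] := IHw N k.
  transitivity (q ^+ 2 * qint k.+2 * defZ k N w); first by rewrite /defZ /=; qint_field.
  by rewrite Zk mulr0.
Qed.

Lemma defects_vanish w : defects_vanish_at w.
Proof.
elim: w => [|[] w IHw]; first exact: defects_nil.
  exact: defects_true.
exact: defects_false.
Qed.

End Defects.

Section Catalan.
Variables (F : fieldType) (q : F).
Hypothesis q_neq_qV : q - q^-1 != 0.

Local Notation qint := (qint q).
Local Notation path_weight := (path_weight q).

Lemma psum0 w : psum w 0 = 0.
Proof. by rewrite /psum big_ord0. Qed.

Lemma psum_cons b w i : psum (b :: w) i.+1 = bar b + psum w i.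
Proof. by rewrite /psum big_ord_recl. Qed.

Lemma psumS w i : psum w i.+1 = psum w i + bar (nth false w i).
Proof. by rewrite /psum big_ord_recr. Qed.

Lemma qint1 : qint 1 = 1.
Proof. by rewrite /Defs.qint expr1z -exprnN expr1 mulfV. Qed.

Lemma path_weightE (h : int) w : path_weight h w =
  (h + psum w (size w) == 0)%:R * \prod_(i < size w) qint (1 + (h + psum w i.+1)).
Proof.
elim: w h => [|b w IHw] h /=; first by rewrite psum0 addr0 big_ord0 mulr1.
rewrite IHw big_ord_recl /= psum_cons psum_cons psum0 addr0 mulrCA !addrA.
congr (_ * (_ * _)); apply: eq_bigr => i _.
by rewrite -[bump 0 i]/(i.+1) psum_cons !addrA.
Qed.

Lemma psum_hits_neg1 (k : int) w i : 0 <= k -> (i <= size w)%N -> k + psum w i < 0 ->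
  exists2 j, (j < size w)%N & k + psum w j.+1 = -1.
Proof.
move=> k_ge0; elim: i => [|i IHi] i_le neg; first by move: neg; rewrite psum0 addr0 ltNge k_ge0.
have [neg_i|nneg_i] := ltP (k + psum w i) 0; first exact: IHi (ltnW i_le) neg_i.
by exists i => //; move: neg nneg_i; rewrite psumS /bar; case: nth; lia.
Qed.

Lemma path_weight_catalan w : path_weight 0 w = if catalan w then Ccoef q w else 0.
Proof.
rewrite path_weightE add0r /catalan.
case: (psum w (size w) == 0); last by rewrite andbF mul0r.
rewrite andbT mul1r; under eq_bigr do rewrite add0r.
case: ifPn => [_ | /allPn[i]]; first by rewrite /Ccoef big_ord_recl psum0 addr0 qint1 mul1r.
rewrite mem_iota -ltNge add1n => /andP[_ i_lt] neg_i.
have [j j_lt psum_j] : exists2 j, (j < size w)%N & 0 + psum w j.+1 = -1.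
  by apply: (psum_hits_neg1 (i := i)); rewrite ?add0r //; lia.
apply/eqP/prodf_eq0; exists (Ordinal j_lt) => //=.
by rewrite -(add0r (psum _ _)) psum_j addrN qint0.
Qed.

Lemma Cn_Paths n : Veq (Cn q n) (Paths q n.*2 0).
Proof.
move=> f; rewrite Vpair_Paths /Vpair /Cn big_map big_filter big_mkcond -mul2n.
by apply: eq_bigr => w _; rewrite path_weight_catalan; case: ifP; rewrite ?mul0r.
Qed.

End Catalan.

Section Convolution.
Variables (F : fieldType) (q : F).
Hypothesis q_neq0 : q != 0.
Variables (A B : nat -> Vrep F) (c : nat -> nat -> F).
Hypotheses (A0 : Veq (A 0%N) (Vone F)) (B0 : Veq (B 0%N) (Vone F)).
Hypothesis AB_conv : forall N w, (0 < N)%N ->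
  \sum_(i < N.+1) c N i * ev (Vstar q (A i) (B (N - i))) w = 0.

Lemma solve_lin (a x s : F) : a != 0 -> s + a * x = 0 -> x = - a^-1 * s.
Proof.
move=> a_neq0 /eqP; rewrite addrC addr_eq0 => /eqP ax.
by apply: (mulfI a_neq0); rewrite ax mulNr mulrN mulVKf.
Qed.

Let ev_AB0 n : ev (Vstar q (A n) (B 0%N)) =1 ev (A n).
Proof. by apply/VeqP/(Veq_trans (Vstar_Veq q (fun=> erefl) B0))/Vstar1r. Qed.

Let ev_A0B n : ev (Vstar q (A 0%N) (B n)) =1 ev (B n).
Proof. by apply/VeqP/(Veq_trans (Vstar_Veq q A0 (fun=> erefl)))/Vstar1l. Qed.

Lemma in_subalg_conv_l : (forall N, (0 < N)%N -> c N N != 0) ->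
  forall n, in_subalg q B (A n).
Proof.
move=> cNN n; elim/ltn_ind: n => -[_|N IHN]; first exact: in_subalg_Veq A0 (in_subalg1 _ _).
apply: (in_subalg_lincomb (s := index_iota 0 N.+1) (a := fun i => - (c N.+1 N.+1)^-1 * c N.+1 i)
          (X := fun i => Vstar q (A i) (B (N.+1 - i)))).
  move=> i; rewrite mem_index_iota => /andP[_ i_le].
  by apply: in_subalgM => //; [apply: IHN | rewrite subSn //; apply: in_subalg_gen].
move=> w; rewrite big_mkord.
have conv := AB_conv w (ltn0Sn N); rewrite big_ord_recr /= subnn ev_AB0 in conv.
by rewrite (solve_lin (cNN _ (ltn0Sn N)) conv) mulr_sumr; apply: eq_bigr => i _; rewrite mulrA.
Qed.

Lemma in_subalg_conv_r : (forall N, (0 < N)%N -> c N 0 != 0) ->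
  forall n, in_subalg q A (B n).
Proof.
move=> cN0 n; elim/ltn_ind: n => -[_|N IHN]; first exact: in_subalg_Veq B0 (in_subalg1 _ _).
apply: (in_subalg_lincomb (s := index_iota 0 N.+1) (a := fun i => - (c N.+1 0)^-1 * c N.+1 i.+1)
          (X := fun i => Vstar q (A i.+1) (B (N - i)))).
  move=> i; rewrite mem_index_iota => /andP[_ i_le].
  by apply: in_subalgM => //; [apply: in_subalg_gen | apply: IHN; rewrite ltnS leq_subr].
move=> w; rewrite big_mkord.
have conv := AB_conv w (ltn0Sn N); rewrite big_ord_recl /= subn0 ev_A0B addrC in conv.
by rewrite (solve_lin (cN0 _ (ltn0Sn N)) conv) mulr_sumr; apply: eq_bigr => i _; rewrite mulrA.
Qed.

End Convolution.

Section Identities.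
Variables (F : fieldType) (q : F).
Hypotheses (q_neq0 : q != 0) (q_not_root1 : forall n, (0 < n)%N -> q ^+ n != 1).

Lemma q_neq_qV : q - q^-1 != 0.
Proof.
apply: contra (q_not_root1 (isT : (0 < 2)%N)) => /eqP q_qV.
have : q * (q - q^-1) = 0 by rewrite q_qV mulr0.
by rewrite mulrBr mulfV // expr2 => /eqP; rewrite subr_eq0.
Qed.

Definition GC_coef N i : F :=
  (q ^+ 2) ^+ i * (- q) ^+ (N - i) - ((q ^+ 2)^-1) ^+ i * (- q^-1) ^+ (N - i).

Lemma Gt_Cn_conv N w :
  \sum_(i < N.+1) GC_coef N i * ev (Vstar q (Gt F i) (Cn q (N - i))) w = 0.
Proof.
have [Y _ _] := defects_vanish q_neq0 q_neq_qV w N 0.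
rewrite -[RHS]Y /defY /Gsum -sumrB (reindex_inj rev_ord_inj); apply: eq_bigr => j _.
have j_le : (j <= N)%N by rewrite -ltnS.
rewrite /= subSS subKn // -mulrBl; congr (_ * _); first by rewrite /GC_coef subKn.
by rewrite /cG add0n; apply: (iffLR (VeqP _ _)); apply: Vstar_Veq (Cn_Paths q_neq_qV j).
Qed.

Lemma GC_coef_diag_neq0 N : (0 < N)%N -> GC_coef N N != 0.
Proof.
move=> N_gt0; rewrite /GC_coef subnn !expr0 !mulr1 subr_eq0.
apply: contra (q_not_root1 (_ : 0 < 4 * N)%N) => [/eqP q2N|]; last by rewrite muln_gt0.
have -> : q ^+ (4 * N) = (q ^+ 2) ^+ N * (q ^+ 2) ^+ N.
  by rewrite -exprD -exprM; congr (_ ^+ _); lia.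
by rewrite {1}q2N -exprMn mulVf ?expr1n // expf_neq0.
Qed.

Lemma GC_coef0_neq0 N : (0 < N)%N -> GC_coef N 0 != 0.
Proof.
move=> N_gt0; rewrite /GC_coef subn0 !expr0 !mul1r subr_eq0.
apply: contra (q_not_root1 (_ : 0 < 2 * N)%N) => [/eqP qN|]; last by rewrite muln_gt0.
have -> : q ^+ (2 * N) = (- q) ^+ N * (- q) ^+ N by rewrite -exprMn mulrNN -expr2 exprM.
by rewrite {2}qN -exprMn mulrNN mulfV ?expr1n.
Qed.

End Identities.

Theorem corollary11p12 (F : fieldType) (q : F) (D : nat -> Vrep F) :
  q != 0 ->
  (forall n : nat, (0 < n)%N -> q ^+ n != 1) ->
  ev (D 0%N) =1 ev (Vone F) ->
  (forall n : nat, (0 < n)%N ->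
     ev (flatten [seq Vstar q (D i) (Gt F (n - i)) | i <- iota 0 n.+1])
     =1 (fun _ => 0)) ->
  (forall p : Vrep F, in_subalg q (Cn q) p <-> in_subalg q D p) /\
  (forall p : Vrep F, in_subalg q D p <-> in_subalg q (Gt F) p).
Proof.
move=> q_neq0 q_not_root1 D0 D_rec.
have Gt0 : Veq (Gt F 0%N) (Vone F) by [].
have Cn0 : Veq (Cn q 0%N) (Vone F).
  by move=> f; rewrite (Cn_Paths (q_neq_qV q_neq0 q_not_root1)) Vpair_Paths0.
have D0' : Veq (D 0%N) (Vone F) by apply/VeqP.
have D_Gt_conv N w : (0 < N)%N ->
    \sum_(i < N.+1) 1 * ev (Vstar q (D i) (Gt F (N - i))) w = 0.
  move=> N_gt0; rewrite -[RHS](D_rec N N_gt0 w) ev_Vpair Vpair_flatten big_map.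
  rewrite -[iota 0 N.+1]/(index_iota 0 N.+1) big_mkord.
  by apply: eq_bigr => i _; rewrite mul1r ev_Vpair.
have Gt_Cn_conv' N w (_ : (0 < N)%N) := Gt_Cn_conv q_neq0 q_not_root1 N w.
have one_neq0 N (_ : (0 < N)%N) := oner_neq0 F.
have D_in_Gt := in_subalg_conv_l (c := fun _ _ => 1) q_neq0 D0' Gt0 D_Gt_conv one_neq0.
have Gt_in_D := in_subalg_conv_r (c := fun _ _ => 1) q_neq0 D0' Gt0 D_Gt_conv one_neq0.
have Gt_in_Cn :=
  in_subalg_conv_l q_neq0 Gt0 Cn0 Gt_Cn_conv' (GC_coef_diag_neq0 q_neq0 q_not_root1).
have Cn_in_Gt :=
  in_subalg_conv_r q_neq0 Gt0 Cn0 Gt_Cn_conv' (GC_coef0_neq0 q_neq0 q_not_root1).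
split=> p; split; apply: (in_subalg_trans q_neq0) => i.
- exact: (in_subalg_trans q_neq0 (g' := Gt F) (fun j => Gt_in_D j.+1) (Cn_in_Gt i.+1)).
- exact: (in_subalg_trans q_neq0 (g' := Gt F) (fun j => Gt_in_Cn j.+1) (D_in_Gt i.+1)).
- exact: D_in_Gt.
- exact: Gt_in_D.
Qed.
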